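(* Let $S=(\mathbb{R}\cup\{-\infty\},\max,+,-\infty,0)$ be the max-plus semiring, let $A\in M_{n}(S)$ with $\det_{\varepsilon}(A)\neq-\infty$, and let $b\in S^{n}$ be a regular vector. Then $(AA^{-})_{ij}\le b_i-b_j$ for all $i,j\in\{1,\dots,n\}$ if and only if the system $AX=b$ has the maximal solution $X^{*}=A^{-}b$.
   Context: Matrix operations over $S$: $(A+B)_{ij}=\max(a_{ij},b_{ij})$, $(AC)_{ij}=\max_k(a_{ik}+c_{kj})$. The $\varepsilon$-determinant (with the identity $\varepsilon$-function) of $A\in M_n(S)$ is $\det_{\varepsilon}(A)=\max_{\sigma\in\mathcal{S}_n}\sum_{i=1}^{n}a_{i\sigma(i)}$. For $n\ge 2$, $A(i|j)$ denotes the $(n-1)\times(n-1)$ submatrix obtained by deleting row $i$ and column $j$, and the $\varepsilon$-adjoint is $\mathrm{adj}_{\varepsilon}(A)_{ij}=\det_{\varepsilon}(A(j|i))$. When $\det_{\varepsilon}(A)$ is a unit of $S$ (i.e. $\neq-\infty$), the pseudo-inverse of $A$ is $A^{-}=(a^{-}_{ij})$ with $a^{-}_{ij}=\mathrm{adj}_{\varepsilon}(A)_{ij}-\det_{\varepsilon}(A)$ (ordinary real subtraction). A vector $b\in S^n$ is regular if $b_i\neq-\infty$ for all $i$; $b_i-b_j$ is ordinary real subtraction. A solution $X^{*}$ of $AX=b$ is maximal if $X\le X^{*}$ componentwise for every solution $X$. *)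

(* Max-plus semiring S = R ∪ {-oo} over the reals,
   encoded as [option R] with [None] standing for -oo. *)
From HB Require Import structures.
From mathcomp Require Import all_boot all_order all_fingroup all_algebra.
From mathcomp Require Import reals.
Set Implicit Arguments. Unset Strict Implicit. Unset Printing Implicit Defensive.
Import Order.TTheory GRing.Theory Num.Theory.
Local Open Scope ring_scope.

Section MaxPlus.
Variable R : realType.

Definition mp := option R.

Definition mpadd (x y : mp) : mp :=
  match x, y with
  | None, _ => y
  | _, None => x
  | Some a, Some b => Some (Num.max a b)
  end.

Definition mpmul (x y : mp) : mp :=
  match x, y with
  | Some a, Some b => Some (a + b)
  | _, _ => None
  end.

Definition mple (x y : mp) : Prop :=
  match x, y with
  | None, _ => True
  | Some _, None => False
  | Some a, Some b => a <= b
  end.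

Definition mpmulmx m n p (A : 'M[mp]_(m, n)) (C : 'M[mp]_(n, p)) : 'M[mp]_(m, p) :=
  \matrix_(i, j) \big[mpadd/None]_(k < n) mpmul (A i k) (C k j).

(* epsilon-determinant with the identity epsilon-function *)
Definition mpdet n (A : 'M[mp]_n) : mp :=
  \big[mpadd/None]_(s : 'S_n) \big[mpmul/Some 0]_(i < n) A i (s i).

Definition mpadj n (A : 'M[mp]_n.+1) : 'M[mp]_n.+1 :=
  \matrix_(i, j) mpdet (row' j (col' i A)).

(* pseudo-inverse: a^-_ij = adj(A)_ij - det(A) (meaningful when det A <> -oo) *)
Definition mppinv n (A : 'M[mp]_n.+1) : 'M[mp]_n.+1 :=
  \matrix_(i, j) match mpadj A i j, mpdet A with
                 | Some a, Some d => Some (a - d)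
                 | _, _ => None
                 end.

Definition mpregular n (b : 'cV[mp]_n) : Prop := forall i, b i ord0 <> None.

Definition mpdiff (x y : mp) : mp :=
  match x, y with
  | Some a, Some c => Some (a - c)
  | _, _ => None
  end.

Definition mpvle n (X Y : 'cV[mp]_n) : Prop := forall i, mple (X i ord0) (Y i ord0).

Definition mp_maximal_solution n (A : 'M[mp]_n) (b Xs : 'cV[mp]_n) : Prop :=
  mpmulmx A Xs = b /\ forall X : 'cV[mp]_n, mpmulmx A X = b -> mpvle X Xs.

End MaxPlus.

(* If the permutation s attains det A, the Laplace bound det A <= a_{i s(i)} + det A(i|s(i))
   gives a_{i s(i)} + a^-_{s(i) i} >= 0 for every i.  Hence (A A^-)_{ii} >= 0, and every
   column k of A^- A has an entry >= 0, which makes A^- b an upper bound of all solutions.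
   Since A (A^- b) = (A A^-) b, the vector A^- b solves A X = b exactly when
   max_j ((A A^-)_{ij} + b_j) = b_i, i.e. when (A A^-)_{ij} <= b_i - b_j. *)
From HB Require Import structures.
From mathcomp Require Import all_boot all_order all_fingroup all_algebra.
From mathcomp Require Import reals.
From mathcomp Require Import lra.
Set Implicit Arguments. Unset Strict Implicit. Unset Printing Implicit Defensive.
Import Order.TTheory GRing.Theory Num.Theory.
Local Open Scope ring_scope.

Section MaxPlusSemiring.
Variable R : realType.
Implicit Types x y z c : mp R.

Lemma mpaddA : associative (@mpadd R).
Proof. by case=> [a|] [b|] [c|] //=; rewrite maxA. Qed.

Lemma mpaddC : commutative (@mpadd R).
Proof. by case=> [a|] [b|] //=; rewrite maxC. Qed.

Lemma mpadd0m : left_id None (@mpadd R).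
Proof. by case. Qed.

Lemma mpmulA : associative (@mpmul R).
Proof. by case=> [a|] [b|] [c|] //=; rewrite addrA. Qed.

Lemma mpmulC : commutative (@mpmul R).
Proof. by case=> [a|] [b|] //=; rewrite addrC. Qed.

Lemma mpmul1m : left_id (Some 0) (@mpmul R).
Proof. by case=> [a|] //=; rewrite add0r. Qed.

Lemma mpmul0m : left_zero None (@mpmul R).
Proof. by []. Qed.

Lemma mpmulm0 : right_zero None (@mpmul R).
Proof. by case. Qed.

Lemma mpmulDr : right_distributive (@mpmul R) (@mpadd R).
Proof. by case=> [a|] [b|] [c|] //=; rewrite addr_maxr. Qed.

Lemma mpmulDl : left_distributive (@mpmul R) (@mpadd R).
Proof. by move=> x y z; rewrite !(mpmulC _ z) mpmulDr. Qed.

HB.instance Definition _ :=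
  Monoid.isComLaw.Build (mp R) None (@mpadd R) mpaddA mpaddC mpadd0m.
HB.instance Definition _ :=
  Monoid.isComLaw.Build (mp R) (Some 0) (@mpmul R) mpmulA mpmulC mpmul1m.
HB.instance Definition _ := Monoid.isMulLaw.Build (mp R) None (@mpmul R) mpmul0m mpmulm0.
HB.instance Definition _ := Monoid.isAddLaw.Build (mp R) (@mpmul R) (@mpadd R) mpmulDl mpmulDr.

Lemma mple_refl x : mple x x.
Proof. by case: x => //= a. Qed.

Lemma mple_trans x y z : mple x y -> mple y z -> mple x z.
Proof. by case: x => [a|] //; case: y => [b|] //; case: z => [c|] //=; apply: le_trans. Qed.

Lemma mple_anti x y : mple x y -> mple y x -> x = y.
Proof. by case: x => [a|]; case: y => [b|] //= h1 h2; congr Some; apply/le_anti/andP. Qed.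

Lemma mpadd_le x y z : mple x z -> mple y z -> mple (mpadd x y) z.
Proof. by case: x => [a|] //; case: y => [b|] //; case: z => [c|] //= h1 h2; rewrite ge_max h1. Qed.

Lemma mpadd_eq x y : mpadd x y = x \/ mpadd x y = y.
Proof.
case: x => [a|]; case: y => [b|] /=; [|by left|by right|by left].
by case: leP; [right | left].
Qed.

Lemma mpmul_le2 x y x' y' : mple x x' -> mple y y' -> mple (mpmul x y) (mpmul x' y').
Proof. by case: x => [a|] //; case: y => [b|]; case: x' => [a'|] //; case: y' => [b'|] //=; apply: lerD. Qed.

Lemma mple_mpmul_ge0 c x : mple (Some 0) c -> mple x (mpmul c x).
Proof. by move=> c_ge0; rewrite -{1}[x]mpmul1m; apply: mpmul_le2 (mple_refl x). Qed.

Lemma mple_mpmul_mpdiff c x y :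
  x <> None -> y <> None -> mple (mpmul c y) x <-> mple c (mpdiff x y).
Proof. by case: x => [a|] //; case: y => [b|] //; case: c => [d|] //= _ _; rewrite lerBrDr. Qed.

Lemma le_bigmpadd (I : finType) (F : I -> mp R) j : mple (F j) (\big[@mpadd R/None]_i F i).
Proof.
rewrite (bigD1 j) //=; case: (F j) => [a|] //.
by case: (\big[_/_]_(i | _) _) => [b|] /=; rewrite ?le_max lexx.
Qed.

Lemma bigmpadd_le (I : finType) (F : I -> mp R) c :
  (forall i, mple (F i) c) -> mple (\big[@mpadd R/None]_i F i) c.
Proof. by move=> F_le; elim/big_rec: _ => //= i x _; apply: mpadd_le. Qed.

Lemma bigmpadd_attained (I : finType) (F : I -> mp R) (i0 : I) :
  exists j, \big[@mpadd R/None]_i F i = F j.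
Proof.
suff [j big_le] : exists j, mple (\big[@mpadd R/None]_i F i) (F j).
  by exists j; apply: mple_anti big_le (le_bigmpadd F j).
elim/big_rec: _ => [|i x _ [j x_le]]; first by exists i0.
by case: (mpadd_eq (F i) x) => ->; [exists i; apply: mple_refl | exists j].
Qed.

Lemma mpmulmxA m n p q (A : 'M[mp R]_(m, n)) (B : 'M[mp R]_(n, p)) (C : 'M[mp R]_(p, q)) :
  mpmulmx A (mpmulmx B C) = mpmulmx (mpmulmx A B) C.
Proof.
apply/matrixP=> i l; rewrite !mxE.
under eq_bigr do rewrite mxE big_distrr /=.
rewrite exchange_big; apply: eq_bigr => j _; rewrite mxE big_distrl /=.
by under eq_bigr do rewrite mpmulA.
Qed.

Lemma le_mpmulmx m n p (A : 'M[mp R]_(m, n)) (X : 'M[mp R]_(n, p)) i k j :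
  mple (mpmul (A i k) (X k j)) (mpmulmx A X i j).
Proof. by rewrite mxE; apply: (le_bigmpadd (fun k => mpmul (A i k) (X k j))). Qed.

Lemma mpdet_term_le_adj n (A : 'M[mp R]_n.+1) (s : 'S_n.+1) i :
  mple (\big[@mpmul R/Some 0]_l A l (s l)) (mpmul (A i (s i)) (mpadj A (s i) i)).
Proof.
rewrite (bigD1_ord i) //= mxE; apply: mpmul_le2 (mple_refl _) _.
pose t (k : 'I_n) := odflt k (unlift (s i) (s (lift i k))).
have tK k : lift (s i) (t k) = s (lift i k).
  rewrite /t; have:= neq_lift i k.
  by rewrite -(can_eq (permK s)) => /unlift_some[] ? ? ->.
have t_inj : injective t.
  by move=> k1 k2 e; apply/(@lift_inj _ i)/(@perm_inj _ s); rewrite -!tK e.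
apply: mple_trans (le_bigmpadd _ (perm t_inj)).
rewrite (eq_bigr (fun l => row' i (col' (s i) A) l (perm t_inj l))); first exact: mple_refl.
by move=> l _; rewrite !mxE permE tK.
Qed.

Section PseudoInverse.
Variables (n : nat) (A : 'M[mp R]_n.+1).
Hypothesis detA : mpdet A <> None.

Lemma mppinv_perm_ge0 : exists s : 'S_n.+1,
  forall i, mple (Some 0) (mpmul (A i (s i)) (mppinv A (s i) i)).
Proof.
have [s det_s] := bigmpadd_attained
  (fun s : 'S_n.+1 => \big[@mpmul R/Some 0]_i A i (s i)) 1%g.
exists s => i; have := mpdet_term_le_adj A s i.
rewrite -det_s -/(mpdet A) [mppinv _ _ _]mxE; case: (mpdet A) detA => [d|] // _.
by case: (A i (s i)) => [a|] //; case: (mpadj A (s i) i) => [c|] //=; lra.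
Qed.

Lemma mpmulmx_pinv_diag_ge0 i : mple (Some 0) (mpmulmx A (mppinv A) i i).
Proof.
have [s s_ge0] := mppinv_perm_ge0.
exact: mple_trans (s_ge0 i) (le_mpmulmx A (mppinv A) i (s i) i).
Qed.

Lemma mppinv_col_ge0 k : exists j, mple (Some 0) (mpmul (mppinv A k j) (A j k)).
Proof.
have [s s_ge0] := mppinv_perm_ge0.
by exists (s^-1 k)%g; have := s_ge0 (s^-1 k)%g; rewrite permKV mpmulC.
Qed.

Lemma solution_le_mppinv_mul (b X : 'cV[mp R]_n.+1) :
  mpmulmx A X = b -> mpvle X (mpmulmx (mppinv A) b).
Proof.
move=> AX_b k; have [j jk_ge0] := mppinv_col_ge0 k.
apply: mple_trans (le_mpmulmx _ _ _ j _).
apply: mple_trans (mple_mpmul_ge0 _ jk_ge0) _.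
rewrite -mpmulA; apply: mpmul_le2 (mple_refl _) _.
by rewrite -AX_b; apply: le_mpmulmx.
Qed.

End PseudoInverse.
End MaxPlusSemiring.

Theorem theorem4p3 (R : realType) (n : nat) (A : 'M[mp R]_n.+1) (b : 'cV[mp R]_n.+1) :
  mpdet A <> None ->
  mpregular b ->
  ((forall i j : 'I_n.+1,
      mple (mpmulmx A (mppinv A) i j) (mpdiff (b i ord0) (b j ord0)))
   <-> mp_maximal_solution A b (mpmulmx (mppinv A) b)).
Proof.
move=> detA b_reg; set P := mpmulmx A (mppinv A).
have AXs_P i : mpmulmx A (mpmulmx (mppinv A) b) i ord0 = mpmulmx P b i ord0.
  by rewrite mpmulmxA.
split=> [P_le | [AXs_b _] i j].
- split; last by move=> X; apply: solution_le_mppinv_mul.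
  apply/matrixP=> i j; rewrite ord1 AXs_P; apply: mple_anti.
  + rewrite mxE; apply: bigmpadd_le => k.
    by apply/mple_mpmul_mpdiff; [apply: b_reg | apply: b_reg | apply: P_le].
  + apply: mple_trans (le_mpmulmx _ _ _ i _).
    exact/mple_mpmul_ge0/mpmulmx_pinv_diag_ge0.
- apply/mple_mpmul_mpdiff; [apply: b_reg | apply: b_reg |].
  by have := le_mpmulmx P b i j ord0; rewrite -AXs_P AXs_b.
Qed.
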